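(* Let $K_5$ be the complete graph on vertex set $[5]$. Then the abelian group $H_1(K_5;\mathbb Z)$ contains an element of order $2$ (i.e. it has $\mathbb Z_2$-torsion).
   Context: Let $G$ be a simple graph with vertex set $[n]$; an edge $\{i,j\}$ with $i<j$ is written $(i,j)$, and $E(G)$ is totally ordered lexicographically. For $F\subseteq E(G)$ let $\beta(F)$ be the partition of $[n]$ into the vertex sets of the connected components of $([n],F)$, and $\mathfrak S_{\beta(F)}\subseteq\mathfrak S_n$ the subgroup of permutations mapping each block to itself. For a commutative ring $R$ let $a_F=\sum_{\sigma\in\mathfrak S_{\beta(F)}}\sigma\in R[\mathfrak S_n]$ and $\mathcal M_F=R[\mathfrak S_n]a_F$; for $e\in F$, $\mathcal M_F\subseteq\mathcal M_{F\setminus e}$. The chain complex is $C_i(G;R)=\bigoplus_{|F|=i}\mathcal M_F$ with $d_i(x)=\sum_{e\in F}(-1)^{|\{f\in F: f<e\}|}\iota_{F,F\setminus e}(x)$ for $x\in\mathcal M_F$, $\iota$ the inclusion into the summand $\mathcal M_{F\setminus e}$; $H_i(G;R)=\ker d_i/\operatorname{im}d_{i+1}$ (the $q$-degree zero chromatic symmetric homology). *)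

From HB Require Import structures.
From mathcomp Require Import all_boot all_order all_algebra all_fingroup.
Set Implicit Arguments. Unset Strict Implicit. Unset Printing Implicit Defensive.
Import GRing.Theory.
Local Open Scope ring_scope.

(* Vertices are 'I_n; an edge {i,j}, i<j, is the pair (i,j). *)
Definition edge (n : nat) := ('I_n * 'I_n)%type.

Definition edge_lt n (p q : edge n) : bool :=
  (p.1 < q.1)%N || ((p.1 == q.1) && (p.2 < q.2)%N).

Definition adjF n (F : {set edge n}) : rel 'I_n :=
  fun x y => ((x, y) \in F) || ((y, x) \in F).

(* sigma lies in S_{beta(F)}: it maps each connected component of ([n],F) to itself *)
Definition in_Sbeta n (F : {set edge n}) (s : {perm 'I_n}) : bool :=
  [forall x : 'I_n, connect (adjF F) x (s x)].

(* the group ring Z[S_n], elements as finitely supported Z-valued functions *)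
Definition galg (n : nat) := {ffun {perm 'I_n} -> int}.

Definition gmul n (x y : galg n) : galg n :=
  [ffun g => \sum_(h : {perm 'I_n}) x h * y (h^-1 * g)%g].

Definition aF n (F : {set edge n}) : galg n :=
  [ffun s => if in_Sbeta F s then 1 else 0].

Definition inM n (F : {set edge n}) (x : galg n) : Prop :=
  exists y : galg n, x = gmul y (aF F).

Definition chain (n : nat) := {ffun {set edge n} -> galg n}.

Definition is_chain n (E : {set edge n}) (i : nat) (c : chain n) : Prop :=
  forall F : {set edge n},
    inM F (c F) /\ (~~ (F \subset E) || (#|F| != i)%N -> c F = 0).

Definition bd n (E : {set edge n}) (c : chain n) : chain n :=
  [ffun F' => \sum_(e in E :\: F')
       (if odd #|[set f in F' | edge_lt f e]| then - c (e |: F') else c (e |: F'))].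

Definition Kn (n : nat) : {set edge n} := [set p : edge n | (p.1 < p.2)%N].

From HB Require Import structures.
From mathcomp Require Import all_boot all_order all_algebra all_fingroup.
Set Implicit Arguments. Unset Strict Implicit. Unset Printing Implicit Defensive.
Import GRing.Theory.
Local Open Scope ring_scope.

(* We exhibit an explicit 1-cycle c and an explicit 2-chain b with d b = 2c, and an
   integer linear form phi on 1-chains, phi x = sum over edges e of the coefficients of
   x({e}) at the permutations of a set W_e, with phi c = 11.  A 2-chain b has
   b(F) = y a_F, and expanding phi (d (y a_F)) for F = {e, f} gives a sum over h of
   y(h) times an even integer, so phi is even on boundaries and c is not a boundary.
   The finite verifications are run by computation, coding permutations of 'I_5 by the
   list of their values and the edges of K_5 by 0, ..., 9. *)

Lemma connect_eq_closed_rel (T : finType) (e R : rel T) :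
  reflexive R -> (forall x y z, R x y -> e y z -> R x z) -> subrel R (connect e) ->
  connect e =2 R.
Proof.
move=> Rrefl Rstep Rsub x y; apply/idP/idP => [/connectP [p ep ->]|]; last exact: Rsub.
suff walk z : path e z p -> R x z -> R x (last z p) by exact: walk ep (Rrefl x).
elim: p z {ep} => //= w p IH z /andP [ezw ep] Rxz.
exact: IH ep (Rstep _ _ _ Rxz ezw).
Qed.

Lemma sum_offdiag_pairs (V : nmodType) (A : nat -> nat -> V) n :
  (forall m, A m m = 0) ->
  \sum_(m <- iota 0 n) \sum_(k <- iota 0 n) A m k =
  \sum_(m <- iota 0 n) \sum_(k <- iota 0 n) (if (m < k)%N then A m k + A k m else 0).
Proof.
move=> Adiag.
have split_mk m k : A m k = (if (m < k)%N then A m k else 0) + (if (k < m)%N then A m k else 0).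
  by case: (ltngtP m k) => [|| <-]; rewrite ?addr0 ?add0r.
under eq_bigr do under eq_bigr do rewrite split_mk.
under eq_bigr do rewrite big_split /=.
rewrite big_split /= [X in _ + X]exchange_big -big_split /=; apply: eq_bigr => m _.
by rewrite -big_split; apply: eq_bigr => k _ /=; case: ifP; rewrite ?addr0.
Qed.

(* A foldr copy of [\sum] (whose big operator is opaque) for the checks run by vm_compute. *)
Definition sumz (T : Type) (f : T -> int) (r : seq T) : int :=
  foldr (fun x acc => f x + acc) 0 r.

Lemma sumzE (T : Type) (f : T -> int) r : sumz f r = \sum_(x <- r) f x.
Proof. by elim: r => [|x r IH]; rewrite ?big_nil ?big_cons //= IH. Qed.

Definition negif (V : zmodType) (b : bool) (x : V) : V := if b then - x else x.

Lemma negif_ffunE (aT : finType) (V : zmodType) b (x : {ffun aT -> V}) a :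
  negif b x a = negif b (x a).
Proof. by case: b; rewrite /negif ?ffunE. Qed.

Lemma negif_sumrM (R : pzRingType) (I : finType) b (y r : I -> R) :
  negif b (\sum_i y i * r i) = \sum_i y i * negif b (r i).
Proof. by case: b; rewrite /negif // -sumrN; apply: eq_bigr => i _; rewrite mulrN. Qed.

Lemma all_iota_lt (P : pred nat) n : all P (iota 0 n) -> forall i, (i < n)%N -> P i.
Proof. by move=> /allP allP i ltin; apply: allP; rewrite mem_iota. Qed.

Lemma all2_iota_lt (P : nat -> nat -> bool) m n :
  all (fun x => all (P x) (iota 0 n)) (iota 0 m) ->
  forall x y, (x < m)%N -> (y < n)%N -> P x y.
Proof. by move=> allP x y ltxm; exact: (@all_iota_lt (P x) n (all_iota_lt allP ltxm)). Qed.

Lemma all3_iota_lt (P : nat -> nat -> nat -> bool) m n o :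
  all (fun x => all (fun y => all (P x y) (iota 0 o)) (iota 0 n)) (iota 0 m) ->
  forall x y z, (x < m)%N -> (y < n)%N -> (z < o)%N -> P x y z.
Proof.
by move=> allP x y z ltxm ltyn; exact: (@all_iota_lt (P x y) o (all2_iota_lt allP ltxm ltyn)).
Qed.

Lemma has_iotaP (P : pred nat) n : reflect (exists2 i, (i < n)%N & P i) (has P (iota 0 n)).
Proof.
apply: (iffP hasP) => [[i]|[i ltin Pi]]; last by exists i; rewrite ?mem_iota.
by rewrite mem_iota => /andP [_ ltin] Pi; exists i.
Qed.

Section PermCode.
Variable n : nat.
Implicit Types g h : {perm 'I_n.+1}.

Definition perm_code g : seq nat := [seq nat_of_ord (g (inord i)) | i <- iota 0 n.+1].

Definition ldiv_code (th tg : seq nat) : seq nat :=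
  [seq nth 0%N tg (index i th) | i <- iota 0 (size tg)].

Lemma size_perm_code g : size (perm_code g) = n.+1.
Proof. by rewrite size_map size_iota. Qed.

Lemma nth_perm_code g i : (i < n.+1)%N -> nth 0%N (perm_code g) i = g (inord i).
Proof. by move=> ltin; rewrite (nth_map 0%N) ?size_iota // nth_iota. Qed.

Lemma uniq_perm_code g : uniq (perm_code g).
Proof.
rewrite map_inj_in_uniq ?iota_uniq // => i j; rewrite !mem_iota /= => ltin ltjn.
by move=> /val_inj /perm_inj /(congr1 (@nat_of_ord _)); rewrite !inordK.
Qed.

Lemma perm_code_permutations g : perm_code g \in permutations (iota 0 n.+1).
Proof.
rewrite mem_permutations; apply: uniq_perm; rewrite ?uniq_perm_code ?iota_uniq // => t.
rewrite mem_iota add0n; apply/mapP/idP => [[i _ ->]|ltt]; first exact: ltn_ord.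
exists (nat_of_ord ((g^-1)%g (inord t))); first by rewrite mem_iota add0n ltn_ord.
by rewrite inord_val permKV inordK.
Qed.

Lemma perm_code_inj : injective perm_code.
Proof.
move=> g h eq_gh; apply/permP => x; apply: ord_inj.
by rewrite -[x]inord_val -!nth_perm_code ?ltn_ord // eq_gh.
Qed.

Lemma sum_perm_code (V : nmodType) (f : seq nat -> V) :
  \sum_(g : {perm 'I_n.+1}) f (perm_code g) = \sum_(t <- permutations (iota 0 n.+1)) f t.
Proof.
rewrite -(big_map perm_code predT f); set codes := map _ _.
have uniq_codes : uniq codes.
  by rewrite map_inj_uniq ?index_enum_uniq //; exact: perm_code_inj.
have sub_codes : {subset codes <= permutations (iota 0 n.+1)}.
  by move=> t /mapP [g _ ->]; exact: perm_code_permutations.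
have size_codes : (size (permutations (iota 0 n.+1)) <= size codes)%N.
  rewrite size_map [index_enum _]unlock -enumT -cardT card_Sn.
  by rewrite size_permutations ?iota_uniq // size_iota.
have [_ eq_codes] := uniq_min_size uniq_codes sub_codes size_codes.
by apply/perm_big/uniq_perm; rewrite ?permutations_uniq.
Qed.

Lemma perm_code_mulV h g : perm_code (h^-1 * g)%g = ldiv_code (perm_code h) (perm_code g).
Proof.
apply: (@eq_from_nth _ 0%N); first by rewrite /ldiv_code !size_map !size_iota.
rewrite size_perm_code => i ltin.
rewrite nth_perm_code // permM /ldiv_code (nth_map 0%N) ?size_iota ?size_perm_code //.
rewrite nth_iota // add0n.
set j := nat_of_ord ((h^-1)%g (inord i)).
have ltjn : (j < n.+1)%N := ltn_ord _.
have hj : h (inord j) = inord i by rewrite inord_val permKV.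
have -> : index i (perm_code h) = j.
  have <- : nth 0%N (perm_code h) j = i by rewrite (nth_perm_code _ ltjn) hj inordK.
  by rewrite index_uniq ?size_perm_code ?uniq_perm_code.
by rewrite (nth_perm_code _ ltjn) inord_val.
Qed.

End PermCode.

Definition efst (i : nat) : nat := nth 0%N [:: 0; 0; 0; 0; 1; 1; 1; 2; 2; 3]%N i.
Definition esnd (i : nat) : nat := nth 0%N [:: 1; 2; 3; 4; 2; 3; 4; 3; 4; 4]%N i.
Definition kedge (i : nat) : edge 5 := (inord (efst i), inord (esnd i)).
Definition edges (s : seq nat) : {set edge 5} := [set e in map kedge s].
Definition edge_ids (s : seq nat) : bool := all (fun i => i < 10)%N s.

Lemma efst_lt i : (i < 10)%N -> (efst i < 5)%N.
Proof. exact: (@all_iota_lt (fun i => efst i < 5)%N). Qed.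

Lemma esnd_lt i : (i < 10)%N -> (esnd i < 5)%N.
Proof. exact: (@all_iota_lt (fun i => esnd i < 5)%N). Qed.

Lemma efst_lt_esnd i : (i < 10)%N -> (efst i < esnd i)%N.
Proof. exact: (@all_iota_lt (fun i => efst i < esnd i)%N). Qed.

Lemma eq_ord_inord (x : 'I_5) a : (a < 5)%N -> (x == inord a) = (nat_of_ord x == a).
Proof. by move=> lta5; rewrite -(inj_eq val_inj) /= inordK. Qed.

Lemma eq_kedge (e : edge 5) i : (i < 10)%N ->
  (e == kedge i) = (nat_of_ord e.1 == efst i) && (nat_of_ord e.2 == esnd i).
Proof. by move=> lti; rewrite -pair_eqE /= !eq_ord_inord ?efst_lt ?esnd_lt. Qed.

Lemma kedge_inj_in i j : (i < 10)%N -> (j < 10)%N -> (kedge i == kedge j) = (i == j).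
Proof.
have inj10 : all (fun i => all (fun j =>
    ((efst i == efst j) && (esnd i == esnd j)) ==> (i == j)) (iota 0 10)) (iota 0 10).
  by [].
move=> lti ltj; apply/idP/eqP => [|-> //]; rewrite eq_kedge //= !inordK ?efst_lt ?esnd_lt //.
by move=> eq_ij; apply/eqP; have := all2_iota_lt inj10 lti ltj; rewrite eq_ij.
Qed.

Lemma mem_edges e s : (e \in edges s) = has (fun i => e == kedge i) s.
Proof. by rewrite inE; elim: s => //= i s IH; rewrite in_cons IH. Qed.

Lemma kedge_in_edges i s : (i < 10)%N -> edge_ids s -> (kedge i \in edges s) = (i \in s).
Proof.
move=> lti; rewrite mem_edges; elim: s => //= j s IH /andP [ltj ids].
by rewrite in_cons IH // kedge_inj_in.
Qed.

Lemma edges_nil : edges [::] = set0.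
Proof. by apply/setP => e; rewrite mem_edges. Qed.

Lemma edges_cons i s : edges (i :: s) = kedge i |: edges s.
Proof. by apply/setP => e; rewrite in_setU1 !mem_edges. Qed.

Lemma Kn5_edges : Kn 5 = edges (iota 0 10).
Proof.
have onto : all (fun x => all (fun y => (x < y)%N ==>
    has (fun i => (efst i == x) && (esnd i == y)) (iota 0 10)) (iota 0 5)) (iota 0 5).
  by [].
apply/setP => -[x y]; rewrite /Kn inE mem_edges; apply/idP/has_iotaP => [ltxy|[i lti]].
  have := all2_iota_lt onto (ltn_ord x) (ltn_ord y).
  rewrite ltxy => /has_iotaP [i lti /andP [/eqP fst_i /eqP snd_i]].
  by exists i; rewrite // eq_kedge //= fst_i snd_i !eqxx.
by rewrite eq_kedge // => /andP [/eqP -> /eqP ->]; exact: efst_lt_esnd.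
Qed.

Lemma map_kedge_uniq s : uniq s -> edge_ids s -> uniq (map kedge s).
Proof.
move=> uniq_s ids; rewrite map_inj_in_uniq // => i j /(allP ids) lti /(allP ids) ltj.
by move/eqP; rewrite kedge_inj_in // => /eqP.
Qed.

Lemma card_edges s : uniq s -> edge_ids s -> #|edges s| = size s.
Proof. by move=> uniq_s ids; rewrite cardsE (card_uniqP (map_kedge_uniq uniq_s ids)) size_map. Qed.

Lemma edges_subset_Kn s : edge_ids s -> edges s \subset Kn 5.
Proof.
move=> ids; rewrite Kn5_edges; apply/subsetP => e; rewrite inE => /mapP [i s_i ->].
by rewrite inE map_f // mem_iota (allP ids i s_i).
Qed.

Lemma sum_edges (V : nmodType) (F : edge 5 -> V) s : uniq s -> edge_ids s ->
  \sum_(e in edges s) F e = \sum_(i <- s) F (kedge i).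
Proof.
move=> uniq_s ids; rewrite -(big_map kedge predT F) big_uniq ?map_kedge_uniq //.
by apply: eq_bigl => e; rewrite inE.
Qed.

Definition kedge_lt (m k : nat) : bool :=
  (efst m < efst k)%N || ((efst m == efst k) && (esnd m < esnd k))%N.

Lemma edge_lt_kedge m k : (m < 10)%N -> (k < 10)%N ->
  edge_lt (kedge m) (kedge k) = kedge_lt m k.
Proof.
move=> ltm ltk; rewrite /edge_lt /kedge_lt /= !inordK ?efst_lt ?esnd_lt //.
by rewrite eq_ord_inord ?efst_lt // inordK ?efst_lt.
Qed.

Lemma card_edges_lt s k : uniq s -> edge_ids s -> (k < 10)%N ->
  #|[set f in edges s | edge_lt f (kedge k)]| = count (kedge_lt^~ k) s.
Proof.
move=> uniq_s ids ltk.
have ids_lt : edge_ids (filter (kedge_lt^~ k) s).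
  by apply/allP => m; rewrite mem_filter => /andP [_ /(allP ids)].
suff -> : [set f in edges s | edge_lt f (kedge k)] = edges (filter (kedge_lt^~ k) s).
  by rewrite card_edges ?filter_uniq // size_filter.
apply/setP => e; rewrite !inE; apply/andP/mapP => [[/mapP [m s_m ->] lt_mk]|].
  by exists m; rewrite // mem_filter s_m andbT -edge_lt_kedge // (allP ids m s_m).
move=> [m]; rewrite mem_filter => /andP [lt_mk s_m] ->; split; first exact: map_f.
by rewrite edge_lt_kedge // (allP ids m s_m).
Qed.

Definition joins (i x y : nat) : bool :=
  ((x == efst i) && (y == esnd i)) || ((x == esnd i) && (y == efst i)).
Definition adj_ids (s : seq nat) (x y : nat) : bool := has (fun i => joins i x y) s.

(* Paths of length at most two; once this relation is closed under adjacency it is the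
   connectivity relation of ([5], edges s). *)
Definition reach2 (s : seq nat) (x y : nat) : bool :=
  [|| x == y, adj_ids s x y | has (fun z => adj_ids s x z && adj_ids s z y) (iota 0 5)].

Definition reach2_closed (s : seq nat) : bool :=
  all (fun x => all (fun y => all (fun z =>
    (reach2 s x y && adj_ids s y z) ==> reach2 s x z) (iota 0 5)) (iota 0 5)) (iota 0 5).

Definition stab_code (s t : seq nat) : bool := all (fun i => reach2 s i (nth 0%N t i)) (iota 0 5).

Lemma reach2_closed1 k : (k < 10)%N -> reach2_closed [:: k].
Proof. exact: (@all_iota_lt (fun k => reach2_closed [:: k])). Qed.

Lemma reach2_closed2 k l : (k < 10)%N -> (l < 10)%N -> reach2_closed [:: k; l].
Proof. by apply: (@all2_iota_lt (fun k l => reach2_closed [:: k; l])); vm_compute. Qed.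

Lemma adjF_edges s (x y : 'I_5) : edge_ids s -> adjF (edges s) x y = adj_ids s x y.
Proof.
move=> ids; rewrite /adjF !mem_edges /adj_ids -has_predU; apply: eq_in_has => i s_i /=.
have lti : (i < 10)%N := allP ids i s_i.
by rewrite !eq_kedge //= /joins; do 4?case: eqP.
Qed.

Lemma connect_edges s (x y : 'I_5) : edge_ids s -> reach2_closed s ->
  connect (adjF (edges s)) x y = reach2 s x y.
Proof.
move=> ids closed; apply: (@connect_eq_closed_rel _ _ (fun x y : 'I_5 => reach2 s x y)).
- by move=> u; rewrite /reach2 eqxx.
- move=> u v w reach_uv; rewrite adjF_edges // => adj_vw.
  by have := all3_iota_lt closed (ltn_ord u) (ltn_ord v) (ltn_ord w); rewrite reach_uv adj_vw.
move=> u v /or3P [/eqP /ord_inj -> | adj_uv | /has_iotaP [z ltz /andP [adj_uz adj_zv]]].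
- exact: connect0.
- by apply: connect1; rewrite adjF_edges.
by apply: (@connect_trans _ _ (inord z)); apply: connect1; rewrite adjF_edges // inordK.
Qed.

Local Notation S5_codes := (permutations (iota 0 5)).

Lemma in_Sbeta_edges s g : edge_ids s -> reach2_closed s ->
  in_Sbeta (edges s) g = stab_code s (perm_code g).
Proof.
move=> ids closed; apply/forallP/allP => [stab i|stab x].
  rewrite mem_iota add0n => /andP [_ lti].
  by have := stab (inord i); rewrite connect_edges // nth_perm_code // inordK.
have := stab x; rewrite mem_iota add0n ltn_ord => /(_ isT).
by rewrite connect_edges // nth_perm_code ?ltn_ord // inord_val.
Qed.

Lemma aF_edges s g : edge_ids s -> reach2_closed s ->
  aF (edges s) g = (stab_code s (perm_code g))%:Z.
Proof. by move=> ids closed; rewrite ffunE in_Sbeta_edges //; case: stab_code. Qed.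

Lemma gmul_aF_edges (Y : seq nat -> int) s g : edge_ids s -> reach2_closed s ->
  gmul [ffun h => Y (perm_code h)] (aF (edges s)) g =
  \sum_(t <- S5_codes) Y t * (stab_code s (ldiv_code t (perm_code g)))%:Z.
Proof.
move=> ids closed; rewrite ffunE.
under eq_bigr => h _ do rewrite ffunE aF_edges // perm_code_mulV.
exact: (@sum_perm_code 4 _ (fun t => Y t * (stab_code s (ldiv_code t (perm_code g)))%:Z)).
Qed.

(* A chain is encoded by listing, for some edge sets F (as lists of edge indices), the
   coefficients y in Z[S_5] of its value y * a_F, each y as a list of (code, coefficient). *)
Definition coef_table := seq (seq nat * int).
Definition chain_table := seq (seq nat * coef_table).

Definition table_coef (tb : coef_table) (t : seq nat) : int :=
  \sum_(j <- tb) if t == j.1 then j.2 else 0.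

Definition chain_of (sl : chain_table) : chain 5 := [ffun F =>
  gmul [ffun h => \sum_(j <- sl) if F == edges j.1 then table_coef j.2 (perm_code h) else 0]
       (aF F)].

Definition wf_chain_table (sl : chain_table) : bool :=
  all (fun j => edge_ids j.1 && all (fun i => i.1 \in S5_codes) j.2) sl.

Definition chain_table_dim (sl : chain_table) (i : nat) : bool :=
  all (fun j => [&& edge_ids j.1, uniq j.1 & size j.1 == i]) sl.

Definition same_ids (s s' : seq nat) : bool :=
  all (fun i => i \in s') s && all (fun i => i \in s) s'.

Definition table_val (sl : chain_table) (s tg : seq nat) : int :=
  sumz (fun j => if same_ids s j.1 then
    sumz (fun i => i.2 * (stab_code s (ldiv_code i.1 tg))%:Z) j.2 else 0) sl.

Definition table_bd (sl : chain_table) (s tg : seq nat) : int :=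
  sumz (fun k => if k \in s then 0 else
    negif (odd (count (kedge_lt^~ k) s)) (table_val sl (k :: s) tg)) (iota 0 10).

Lemma eq_edges s s' : edge_ids s -> edge_ids s' -> (edges s == edges s') = same_ids s s'.
Proof.
move=> ids ids'; apply/eqP/andP => [eq_ss'|[/allP sub /allP sub']].
  split; apply/allP => i s_i.
    have lti : (i < 10)%N := allP ids i s_i.
    by rewrite -(kedge_in_edges lti ids') -eq_ss' kedge_in_edges.
  have lti : (i < 10)%N := allP ids' i s_i.
  by rewrite -(kedge_in_edges lti ids) eq_ss' kedge_in_edges.
apply/setP => e; rewrite !inE; apply/mapP/mapP => -[i s_i ->].
  by exists i => //; apply: sub.
by exists i => //; apply: sub'.
Qed.

Lemma sum_table_coef (tb : coef_table) (G : seq nat -> int) :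
  all (fun j => j.1 \in S5_codes) tb ->
  \sum_(t <- S5_codes) table_coef tb t * G t = \sum_(j <- tb) j.2 * G j.1.
Proof.
move=> /allP codes_tb; under eq_bigr do rewrite big_distrl /=.
rewrite exchange_big /=; apply: eq_big_seq => j tb_j.
rewrite (bigD1_seq j.1) ?codes_tb ?permutations_uniq //= eqxx big1 ?addr0 // => t.
by move=> /negbTE ->; rewrite mul0r.
Qed.

Lemma chain_of_val sl s g : edge_ids s -> reach2_closed s -> wf_chain_table sl ->
  chain_of sl (edges s) g = table_val sl s (perm_code g).
Proof.
move=> ids closed /allP wf_sl; rewrite ffunE.
set Y := fun t => \sum_(j <- sl) if same_ids s j.1 then table_coef j.2 t else 0.
have -> : [ffun h => \sum_(j <- sl) if edges s == edges j.1 then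
    table_coef j.2 (perm_code h) else 0] = [ffun h : {perm 'I_5} => Y (perm_code h)].
  apply/ffunP => h; rewrite !ffunE; apply: eq_big_seq => j /wf_sl /andP [ids_j _].
  by rewrite eq_edges.
rewrite gmul_aF_edges // /table_val sumzE.
under eq_bigr do rewrite big_distrl /=.
rewrite exchange_big /=; apply: eq_big_seq => j /wf_sl /andP [_ codes_j].
case: same_ids; last by rewrite big1 // => t _; rewrite mul0r.
by rewrite sum_table_coef // sumzE.
Qed.

Lemma gmul0 n (x : galg n) : gmul 0 x = 0.
Proof. by apply/ffunP => g; rewrite !ffunE big1 // => h _; rewrite ffunE mul0r. Qed.

Lemma chain_of_out sl i (F : {set edge 5}) : chain_table_dim sl i ->
  ~~ (F \subset Kn 5) || (#|F| != i) -> chain_of sl F = 0.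
Proof.
move=> /allP dim_sl outF; rewrite ffunE -[RHS](gmul0 (aF F)); congr gmul.
apply/ffunP => h; rewrite !ffunE; apply: big1_seq => j /andP [_ sl_j].
have /and3P [ids uniq_j /eqP size_j] := dim_sl j sl_j.
case: eqP => // eq_F; move: outF.
by rewrite eq_F edges_subset_Kn // card_edges // size_j eqxx.
Qed.

Lemma chain_of_is_chain sl i : chain_table_dim sl i -> is_chain (Kn 5) i (chain_of sl).
Proof. by move=> dim_sl F; split; [eexists; rewrite ffunE | exact: chain_of_out]. Qed.

Lemma bd_edges (X : chain 5) s : uniq s -> edge_ids s ->
  bd (Kn 5) X (edges s) = \sum_(k <- iota 0 10)
    (if k \in s then 0 else negif (odd (count (kedge_lt^~ k) s)) (X (edges (k :: s)))).
Proof.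
move=> uniq_s ids; rewrite ffunE.
under [LHS]eq_bigl do rewrite in_setD andbC.
rewrite big_mkcondr Kn5_edges sum_edges ?iota_uniq //.
apply: eq_big_seq => k; rewrite mem_iota add0n => /andP [_ ltk].
by rewrite kedge_in_edges // edges_cons card_edges_lt //; case: (k \in s).
Qed.

Lemma bd_out (X : chain 5) i (F : {set edge 5}) :
  (forall F : {set edge 5}, ~~ (F \subset Kn 5) || (#|F| != i) -> X F = 0) ->
  ~~ ((F \subset Kn 5) && (#|F|.+1 == i)) -> bd (Kn 5) X F = 0.
Proof.
move=> X_out outF; rewrite ffunE; apply: big1 => e; rewrite in_setD => /andP [eF eK].
rewrite X_out ?oppr0 ?if_same // -negb_and; apply: contra outF => /andP [sub /eqP <-].
by rewrite cardsU1 eF add1n eqxx (subset_trans (subsetUr _ _) sub).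
Qed.

Lemma bd_chain_of_val sl s g : uniq s -> edge_ids s -> wf_chain_table sl ->
  (forall k, (k < 10)%N -> reach2_closed (k :: s)) ->
  bd (Kn 5) (chain_of sl) (edges s) g = table_bd sl s (perm_code g).
Proof.
move=> uniq_s ids wf_sl closed; rewrite bd_edges // sum_ffunE /table_bd sumzE.
apply: eq_big_seq => k; rewrite mem_iota add0n => /andP [_ ltk].
case: (k \in s); first by rewrite ffunE.
by rewrite negif_ffunE chain_of_val //= ?ltk ?closed.
Qed.

Section ParityForm.
Variable W : nat -> coef_table.
Hypothesis W_codes : forall m, (m < 10)%N -> all (fun j => j.1 \in S5_codes) (W m).

Definition parity_form (x : chain 5) : int :=
  \sum_(m <- iota 0 10) \sum_(g : {perm 'I_5}) table_coef (W m) (perm_code g) * x (edges [:: m]) g.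

Lemma parity_form_chain_of sl : wf_chain_table sl ->
  parity_form (chain_of sl) =
  sumz (fun m => sumz (fun j => j.2 * table_val sl [:: m] j.1) (W m)) (iota 0 10).
Proof.
move=> wf_sl; rewrite sumzE; apply: eq_big_seq => m; rewrite mem_iota add0n => /andP [_ ltm].
under eq_bigr do rewrite chain_of_val ?reach2_closed1 //= ?ltm //.
rewrite (@sum_perm_code 4 _ (fun t => table_coef (W m) t * table_val sl [:: m] t)).
by rewrite sum_table_coef ?W_codes // sumzE.
Qed.

Definition weight_coef (m : nat) (s th : seq nat) : int :=
  sumz (fun j => j.2 * (stab_code s (ldiv_code th j.1))%:Z) (W m).

Lemma sum_weight_gmul_aF m y s : (m < 10)%N -> edge_ids s -> reach2_closed s ->
  \sum_(g : {perm 'I_5}) table_coef (W m) (perm_code g) * gmul y (aF (edges s)) g =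
  \sum_(h : {perm 'I_5}) y h * weight_coef m s (perm_code h).
Proof.
move=> ltm ids closed; under eq_bigr => g _ do rewrite ffunE big_distrr /=.
rewrite exchange_big /=; apply: eq_bigr => h _.
rewrite /weight_coef sumzE.
set G := fun t => (stab_code s (ldiv_code (perm_code h) t))%:Z.
rewrite -(sum_table_coef G (W_codes ltm)) -(@sum_perm_code 4) big_distrr /=.
by apply: eq_bigr => g _; rewrite aF_edges // perm_code_mulV mulrCA.
Qed.

(* For F = {e, f}, each coefficient y(h) in phi (d (y a_F)) comes with an even factor. *)
Definition parity_check : bool :=
  all (fun m => all (fun k => (m < k)%N ==> all (fun th =>
    (2 %| negif (kedge_lt m k) (weight_coef m [:: k; m] th) +
          negif (kedge_lt k m) (weight_coef k [:: k; m] th))%Z) S5_codes)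
  (iota 0 10)) (iota 0 10).

Hypothesis W_parity : parity_check.

Lemma parity_form_bd_even b : is_chain (Kn 5) 2 b -> (2 %| parity_form (bd (Kn 5) b))%Z.
Proof.
move=> chain_b.
pose A m k := if k == m then 0 else negif (kedge_lt m k)
  (\sum_(g : {perm 'I_5}) table_coef (W m) (perm_code g) * b (edges [:: k; m]) g).
have -> : parity_form (bd (Kn 5) b) = \sum_(m <- iota 0 10) \sum_(k <- iota 0 10) A m k.
  apply: eq_big_seq => m; rewrite mem_iota add0n => /andP [_ ltm].
  have ids_m : edge_ids [:: m] by rewrite /edge_ids /= ltm.
  under eq_bigr do rewrite (bd_edges b (isT : uniq [:: m]) ids_m) sum_ffunE big_distrr /=.
  rewrite exchange_big /=; apply: eq_bigr => k _; rewrite /A mem_seq1.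
  case: (k == m); first by rewrite big1 // => g _; rewrite ffunE mulr0.
  rewrite /= addn0 oddb negif_sumrM; apply: eq_bigr => g _.
  by rewrite negif_ffunE /negif; case: kedge_lt; rewrite ?mulrN.
rewrite sum_offdiag_pairs => [|m]; last by rewrite /A eqxx.
rewrite big_seq; apply: rpred_sum => m; rewrite mem_iota add0n => /andP [_ ltm].
rewrite big_seq; apply: rpred_sum => k; rewrite mem_iota add0n => /andP [_ ltk].
case: ifP => [lt_mk|_]; last exact: dvdz0.
have [[y b_km] _] := chain_b (edges [:: k; m]).
have edges_mk : edges [:: m; k] = edges [:: k; m].
  by apply/setP => e; rewrite !mem_edges /= !orbF orbC.
rewrite /A (ltn_eqF lt_mk) (gtn_eqF lt_mk) edges_mk b_km.
rewrite !sum_weight_gmul_aF ?reach2_closed2 //= ?ltk ?ltm // !negif_sumrM -big_split.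
apply: rpred_sum => h _ /=; rewrite -mulrDr; apply: dvdz_mull.
have := all2_iota_lt W_parity ltm ltk; rewrite lt_mk => /allP; apply.
exact: perm_code_permutations.
Qed.

End ParityForm.

Definition cycle_table : chain_table := [::
  ([::0], [::([::0;1;2;3;4], - 1%:Z);
    ([::0;1;2;4;3], - 1%:Z);
    ([::0;1;3;2;4], - 1%:Z);
    ([::0;1;4;2;3], - 1%:Z);
    ([::0;3;1;2;4], - 1%:Z);
    ([::0;3;2;1;4], - 1%:Z);
    ([::0;4;1;2;3], - 1%:Z);
    ([::0;4;2;1;3], - 1%:Z);
    ([::2;0;1;3;4], - 1%:Z);
    ([::2;0;1;4;3], - 1%:Z);
    ([::2;0;3;1;4], - 1%:Z);
    ([::2;0;4;1;3], - 1%:Z);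
    ([::2;3;0;1;4], - 1%:Z);
    ([::2;4;0;1;3], - 2%:Z);
    ([::3;0;1;2;4], - 2%:Z);
    ([::3;0;2;1;4], - 2%:Z);
    ([::3;0;2;4;1], - 1%:Z);
    ([::3;0;4;2;1], - 1%:Z);
    ([::3;2;0;1;4], - 1%:Z);
    ([::3;4;0;1;2], - 1%:Z);
    ([::3;4;0;2;1], - 1%:Z);
    ([::3;4;2;0;1], - 1%:Z);
    ([::4;0;1;2;3], - 1%:Z);
    ([::4;0;1;3;2], - 1%:Z);
    ([::4;0;2;1;3], - 1%:Z);
    ([::4;0;2;3;1], - 1%:Z);
    ([::4;0;3;1;2], - 1%:Z);
    ([::4;0;3;2;1], - 1%:Z);
    ([::4;2;0;1;3], - 1%:Z);
    ([::4;2;0;3;1], - 1%:Z);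
    ([::4;2;3;0;1], - 1%:Z);
    ([::4;3;0;1;2], - 1%:Z);
    ([::4;3;0;2;1], - 1%:Z);
    ([::4;3;2;0;1], - 1%:Z)]);
  ([::1], [::([::0;1;2;3;4], - 1%:Z);
    ([::0;1;2;4;3], - 1%:Z);
    ([::0;1;3;2;4], - 1%:Z);
    ([::0;1;4;2;3], - 1%:Z);
    ([::0;2;1;4;3], - 1%:Z);
    ([::0;2;4;1;3], - 1%:Z);
    ([::3;0;1;4;2], - 1%:Z);
    ([::3;0;4;1;2], - 1%:Z)]);
  ([::2], [::([::0;1;2;4;3], - 1%:Z);
    ([::0;1;4;2;3], - 1%:Z);
    ([::0;2;1;3;4], - 1%:Z);
    ([::0;2;1;4;3], - 1%:Z);
    ([::0;2;3;1;4], - 1%:Z);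
    ([::0;2;4;1;3], - 1%:Z);
    ([::2;1;0;3;4], 1%:Z)]);
  ([::3], [::([::0;1;2;4;3], 1%:Z);
    ([::0;1;4;2;3], 1%:Z);
    ([::0;2;1;4;3], 1%:Z);
    ([::0;2;4;1;3], 1%:Z);
    ([::1;0;2;4;3], - 1%:Z);
    ([::1;0;4;2;3], - 1%:Z);
    ([::2;1;0;4;3], 1%:Z);
    ([::3;0;1;2;4], 1%:Z);
    ([::3;0;2;1;4], 1%:Z);
    ([::3;1;0;2;4], 1%:Z);
    ([::3;1;2;0;4], 1%:Z);
    ([::3;2;0;1;4], 1%:Z);
    ([::3;2;1;0;4], 1%:Z)]);
  ([::4], [::([::0;1;2;3;4], 1%:Z);
    ([::0;1;3;2;4], 1%:Z);
    ([::0;3;1;2;4], 1%:Z);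
    ([::0;4;1;2;3], 1%:Z);
    ([::1;3;0;2;4], 1%:Z);
    ([::1;3;2;0;4], 1%:Z);
    ([::1;4;0;2;3], 1%:Z);
    ([::1;4;2;0;3], 1%:Z);
    ([::3;0;1;2;4], 1%:Z);
    ([::3;1;0;2;4], 1%:Z);
    ([::3;1;2;0;4], 1%:Z);
    ([::4;0;1;2;3], 1%:Z);
    ([::4;0;1;3;2], 1%:Z);
    ([::4;0;3;1;2], 1%:Z);
    ([::4;1;0;3;2], 1%:Z);
    ([::4;1;2;3;0], 1%:Z);
    ([::4;1;3;0;2], 1%:Z);
    ([::4;1;3;2;0], 1%:Z);
    ([::4;3;0;1;2], 1%:Z);
    ([::4;3;1;0;2], 1%:Z);
    ([::4;3;1;2;0], 1%:Z)]);
  ([::5], [::([::1;4;0;2;3], 1%:Z);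
    ([::1;4;2;0;3], 1%:Z)]);
  ([::6], [::([::0;2;1;4;3], 1%:Z);
    ([::3;2;1;4;0], 1%:Z)]);
  ([::7], [::([::2;0;1;4;3], 1%:Z);
    ([::2;0;4;1;3], 1%:Z);
    ([::2;4;0;1;3], 1%:Z);
    ([::2;4;1;0;3], 1%:Z)]);
  ([::8], [::([::0;1;2;4;3], 1%:Z);
    ([::1;0;2;4;3], 1%:Z);
    ([::3;0;2;4;1], 1%:Z);
    ([::3;1;2;4;0], 1%:Z)]);
  ([::9], [::([::0;1;2;3;4], 1%:Z);
    ([::0;1;3;2;4], 1%:Z);
    ([::1;0;2;3;4], 1%:Z);
    ([::1;0;3;2;4], 1%:Z);
    ([::2;0;1;3;4], 1%:Z);
    ([::2;0;3;1;4], 1%:Z);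
    ([::2;1;0;3;4], 1%:Z);
    ([::2;1;3;0;4], 1%:Z)])].


Definition boundary_table : chain_table := [::
  ([::0;1], [::([::0;4;1;2;3], 1%:Z);
    ([::3;0;1;2;4], 1%:Z);
    ([::3;4;0;1;2], 1%:Z);
    ([::4;0;1;2;3], 1%:Z)]);
  ([::0;2], [::([::0;1;2;3;4], 1%:Z);
    ([::0;1;3;2;4], 1%:Z);
    ([::2;0;1;3;4], 1%:Z);
    ([::4;0;1;2;3], 1%:Z);
    ([::4;0;1;3;2], 1%:Z);
    ([::4;0;2;1;3], 1%:Z);
    ([::4;2;0;1;3], 1%:Z)]);
  ([::0;3], [::([::2;0;1;4;3], 1%:Z);
    ([::3;0;1;2;4], 1%:Z);
    ([::3;0;2;1;4], 1%:Z)]);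
  ([::0;4], [::([::0;3;1;2;4], 1%:Z);
    ([::0;4;1;2;3], 1%:Z);
    ([::3;0;1;2;4], 1%:Z);
    ([::4;0;1;3;2], 1%:Z);
    ([::4;0;3;1;2], 1%:Z);
    ([::4;3;0;1;2], 1%:Z)]);
  ([::0;7], [::([::2;4;0;1;3], 1%:Z)]);
  ([::0;8], [::([::0;1;2;4;3], 1%:Z);
    ([::3;0;2;4;1], 1%:Z)]);
  ([::0;9], [::([::0;1;2;3;4], 1%:Z);
    ([::0;1;3;2;4], 1%:Z);
    ([::2;0;1;3;4], 1%:Z);
    ([::2;0;3;1;4], 1%:Z)]);
  ([::1;2], [::([::0;1;2;3;4], 1%:Z)]);
  ([::1;3], [::([::0;1;2;4;3], 1%:Z);
    ([::0;2;1;4;3], 1%:Z);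
    ([::0;2;4;1;3], 1%:Z);
    ([::3;0;1;2;4], 1%:Z);
    ([::3;0;2;1;4], 1%:Z)]);
  ([::1;5], [::([::1;4;0;2;3], 1%:Z)]);
  ([::1;6], [::([::0;2;1;4;3], 1%:Z);
    ([::3;0;1;4;2], 1%:Z)]);
  ([::1;9], [::([::0;1;2;3;4], 1%:Z);
    ([::0;1;3;2;4], 1%:Z)]);
  ([::2;3], [::([::0;1;2;3;4], 1%:Z);
    ([::0;1;3;2;4], 1%:Z);
    ([::0;2;1;3;4], 1%:Z);
    ([::0;2;3;1;4], 1%:Z)]);
  ([::2;4], [::([::0;1;2;3;4], 1%:Z);
    ([::0;1;3;2;4], 1%:Z);
    ([::0;3;1;2;4], 1%:Z);
    ([::1;0;2;3;4], 1%:Z);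
    ([::1;0;3;2;4], 1%:Z);
    ([::4;0;1;2;3], 1%:Z);
    ([::4;0;1;3;2], 1%:Z);
    ([::4;0;3;1;2], 1%:Z);
    ([::4;1;0;3;2], 1%:Z)]);
  ([::2;6], [::([::0;2;1;4;3], 1%:Z)]);
  ([::2;8], [::([::0;1;2;4;3], 1%:Z)]);
  ([::3;4], [::([::0;1;2;3;4], 1%:Z);
    ([::0;1;3;2;4], 1%:Z);
    ([::0;4;1;2;3], 1%:Z);
    ([::1;0;2;4;3], 1%:Z);
    ([::1;0;4;2;3], 1%:Z)]);
  ([::3;5], [::([::1;0;2;4;3], 1%:Z);
    ([::1;0;4;2;3], 1%:Z)]);
  ([::3;7], [::([::2;0;1;4;3], 1%:Z);
    ([::2;0;4;1;3], 1%:Z)]);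
  ([::4;9], [::([::1;0;2;3;4], 1%:Z);
    ([::1;0;3;2;4], 1%:Z)]);
  ([::5;8], [::([::1;0;2;4;3], 1%:Z)]);
  ([::6;7], [::([::2;0;1;4;3], 1%:Z)])].


Definition weight_codes : seq (seq (seq nat)) := [::
  [::];
  [::];
  [::[::0;1;2;3;4];[::0;1;2;4;3];[::0;1;4;2;3];[::0;1;4;3;2];[::0;2;1;3;4];[::0;2;1;4;3];
    [::0;4;1;2;3];[::0;4;1;3;2];[::1;0;2;3;4];[::1;0;2;4;3];[::1;0;4;2;3];[::1;0;4;3;2];
    [::1;2;0;3;4];[::1;2;0;4;3];[::1;4;0;2;3];[::1;4;0;3;2];[::2;0;1;3;4];[::2;0;1;4;3];
    [::2;1;0;3;4];[::2;1;0;4;3];[::4;0;1;2;3];[::4;0;1;3;2];[::4;1;0;2;3];[::4;1;0;3;2]];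
  [::[::0;1;3;2;4];[::0;1;3;4;2];[::0;3;1;2;4];[::0;3;1;4;2];[::1;0;3;2;4];[::1;0;3;4;2];
    [::1;3;0;2;4];[::1;3;0;4;2];[::3;0;1;2;4];[::3;0;1;4;2];[::3;1;0;2;4];[::3;1;0;4;2]];
  [::[::0;1;3;2;4];[::0;1;3;4;2];[::0;1;4;2;3];[::0;1;4;3;2];[::0;3;1;2;4];[::0;3;1;4;2];
    [::0;4;1;2;3];[::0;4;1;3;2];[::1;0;3;2;4];[::1;0;3;4;2];[::1;0;4;2;3];[::1;0;4;3;2];
    [::1;3;0;2;4];[::1;3;0;4;2];[::1;4;0;2;3];[::1;4;0;3;2];[::3;0;1;2;4];[::3;0;1;4;2];
    [::3;1;0;2;4];[::3;1;0;4;2];[::4;0;1;2;3];[::4;0;1;3;2];[::4;1;0;2;3];[::4;1;0;3;2]];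
  [::];
  [::[::0;1;2;3;4];[::0;1;2;4;3];[::0;2;1;3;4];[::0;2;1;4;3];[::1;0;2;3;4];[::1;0;2;4;3];
    [::1;2;0;3;4];[::1;2;0;4;3];[::2;0;1;3;4];[::2;0;1;4;3];[::2;1;0;3;4];[::2;1;0;4;3]];
  [::[::0;1;2;3;4];[::0;1;2;4;3];[::0;2;1;3;4];[::0;2;1;4;3];[::1;0;2;3;4];[::1;0;2;4;3];
    [::1;2;0;3;4];[::1;2;0;4;3];[::2;0;1;3;4];[::2;0;1;4;3];[::2;1;0;3;4];[::2;1;0;4;3]];
  [::];
  [::]].


Definition weights (m : nat) : coef_table := [seq (t, 1) | t <- nth [::] weight_codes m].

Definition cycle5 : chain 5 := chain_of cycle_table.
Definition bound5 : chain 5 := chain_of boundary_table.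

Lemma cycle_table_dim : chain_table_dim cycle_table 1. Proof. by vm_compute. Qed.
Lemma boundary_table_dim : chain_table_dim boundary_table 2. Proof. by vm_compute. Qed.
Lemma wf_cycle_table : wf_chain_table cycle_table. Proof. by vm_compute. Qed.
Lemma wf_boundary_table : wf_chain_table boundary_table. Proof. by vm_compute. Qed.

Lemma weights_codes m : (m < 10)%N -> all (fun j => j.1 \in S5_codes) (weights m).
Proof.
by apply: (@all_iota_lt (fun m => all (fun j => j.1 \in S5_codes) (weights m))); vm_compute.
Qed.

Lemma weights_parity : parity_check weights.
Proof. by vm_compute. Qed.

Lemma bd_cycle5 : bd (Kn 5) cycle5 = 0.
Proof.
have bd_table0 : all (fun t => table_bd cycle_table [::] t == 0) S5_codes by vm_compute.
apply/ffunP => F; rewrite [RHS]ffunE.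
have [/andP [_ /eqP [/cards0_eq ->]]|outF] := boolP ((F \subset Kn 5) && (#|F|.+1 == 1)%N).
  rewrite -edges_nil; apply/ffunP => g; rewrite [RHS]ffunE /cycle5.
  rewrite (bd_chain_of_val g (isT : uniq [::]) isT wf_cycle_table reach2_closed1).
  by apply/eqP/(allP bd_table0)/perm_code_permutations.
exact: bd_out (fun F' => @chain_of_out _ _ F' cycle_table_dim) outF.
Qed.

Lemma bd_bound5 : bd (Kn 5) bound5 = cycle5 *+ 2.
Proof.
have bd_table : all (fun m => all (fun t =>
    table_bd boundary_table [:: m] t == table_val cycle_table [:: m] t *+ 2) S5_codes)
  (iota 0 10) by vm_compute.
apply/ffunP => F; rewrite ffunMnE.
have [/andP [sub /eqP [/eqP /cards1P [f eq_F]]]|outF] :=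
  boolP ((F \subset Kn 5) && (#|F|.+1 == 2)%N); last first.
  rewrite (bd_out (fun F' => @chain_of_out _ _ F' boundary_table_dim) outF).
  have F_out : ~~ (F \subset Kn 5) || (#|F| != 1)%N by move: outF; rewrite negb_and eqSS.
  by rewrite (chain_of_out cycle_table_dim F_out) mul0rn.
have [m ltm f_m] : exists2 m, (m < 10)%N & f = kedge m.
  move: sub; rewrite eq_F sub1set Kn5_edges inE => /mapP [m].
  by rewrite mem_iota add0n => /andP [_ ltm] ->; exists m.
have edges_m : [set kedge m] = edges [:: m] by rewrite edges_cons edges_nil setU0.
have ids_m : edge_ids [:: m] by rewrite /edge_ids all_seq1.
rewrite eq_F f_m edges_m; apply/ffunP => g; rewrite ffunMnE /bound5 /cycle5.
rewrite (bd_chain_of_val g (isT : uniq [:: m]) ids_m wf_boundary_table); last first.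
  by move=> k ltk; exact: reach2_closed2.
rewrite (chain_of_val g ids_m (reach2_closed1 ltm) wf_cycle_table).
by apply/eqP; move: (all_iota_lt bd_table ltm) => /allP; apply; exact: perm_code_permutations.
Qed.

Lemma parity_form_cycle5 : parity_form weights cycle5 = 11.
Proof. by rewrite (parity_form_chain_of weights_codes wf_cycle_table); vm_compute. Qed.

Theorem theorem4p1 :
  exists c : chain 5,
    [/\ is_chain (Kn 5) 1 c,
        bd (Kn 5) c = 0,
        ~ (exists b : chain 5, is_chain (Kn 5) 2 b /\ bd (Kn 5) b = c)
      & exists b : chain 5, is_chain (Kn 5) 2 b /\ bd (Kn 5) b = c *+ 2].
Proof.
exists cycle5; split.
- exact: chain_of_is_chain cycle_table_dim.
- exact: bd_cycle5.
- move=> [b [chain_b bd_b]].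
  have := parity_form_bd_even weights_codes weights_parity chain_b.
  by rewrite bd_b parity_form_cycle5.
- by exists bound5; split; [exact: chain_of_is_chain boundary_table_dim | exact: bd_bound5].
Qed.
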